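(* Let $\varepsilon>0$, $0<\tau\le\varepsilon$ and $\lambda:=\tau/\varepsilon$. Let $u_n\in\mathcal V_{[0,1]}$ and let $(u_{n+1},\beta_{n+1})$ with $\beta_{n+1}\in\mathcal B(u_{n+1})$ satisfy \[ u_{n+1} -e^{-\tau\Delta}u_n-\lambda u_{n+1}+\lambda\overline{u_{n+1}}\mathbf{1} =\lambda\beta_{n+1} -\lambda\overline{\beta_{n+1}}\mathbf{1}. \] Suppose $\bar u:=\overline{u_n}=\overline{u_{n+1}}\in(0,1)$. Then $(\beta_{n+1})_i-\overline{\beta_{n+1}}\in[\bar u-1,\bar u]$ and $(\beta_{n+1})_i\in[-1,1]$ for all $i\in V$.
   Context: $G=(V,E)$ is a finite, simple, connected, undirected graph with weights $\omega_{ij}=\omega_{ji}>0$ for $ij\in E$, $\omega_{ij}=0$ otherwise; $d_i=\sum_j\omega_{ij}$, $r\in[0,1]$ fixed. $\mathcal V$ = functions $V\to\mathbb R$ with $\langle u,v\rangle_{\mathcal V}=\sum_i u_iv_id_i^r$; $\mathcal V_{[0,1]}$ = functions $V\to[0,1]$. $(\Delta u)_i=d_i^{-r}\sum_j\omega_{ij}(u_i-u_j)$, $e^{-\tau\Delta}$ its matrix exponential. $\mathbf 1$ all-ones; $\mathcal M(u)=\langle u,\mathbf 1\rangle_{\mathcal V}$; $\bar v=\mathcal M(v)/\mathcal M(\mathbf 1)$. For $u\in\mathcal V_{[0,1]}$, $\mathcal B(u)$ = set of $\beta\in\mathcal V$ with $\beta_i\ge0$ if $u_i=0$, $\beta_i=0$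 if $0<u_i<1$, $\beta_i\le0$ if $u_i=1$; $\mathcal B(u)=\emptyset$ otherwise. *)

From HB Require Import structures.
From mathcomp Require Import all_boot all_order all_algebra.
From mathcomp Require Import all_classical all_reals all_analysis.
Set Implicit Arguments. Unset Strict Implicit. Unset Printing Implicit Defensive.
Import Order.TTheory GRing.Theory Num.Theory.
Local Open Scope ring_scope.

Section GraphDefs.
Variables (R : realType) (T : finType).

Definition weighted_graph (omega : T -> T -> R) : Prop :=
  [/\ forall i j, omega i j = omega j i,
      forall i j, 0 <= omega i j,
      forall i, omega i i = 0
    & forall i j, connect [rel a b | 0 < omega a b] i j].

Definition degree (omega : T -> T -> R) (i : T) : R := \sum_(j : T) omega i j.

Definition graph_laplacian (omega : T -> T -> R) (r : R) (u : T -> R) : T -> R :=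
  fun i => (powR (degree omega i) r)^-1 * \sum_(j : T) omega i j * (u i - u j).

(* (e^{-tau Delta} u)_i = lim_N sum_{k<N} (-tau)^k / k! (Delta^k u)_i
   (matrix exponential, as the entrywise limit of its power series). *)
Definition heat_semigroup (omega : T -> T -> R) (r tau : R) (u : T -> R) : T -> R :=
  fun i => limn (fun N : nat =>
    \sum_(k < N) ((- tau) ^+ k / (k`!)%:R) * iter k (graph_laplacian omega r) u i).

Definition mass (omega : T -> T -> R) (r : R) (u : T -> R) : R :=
  \sum_(i : T) u i * powR (degree omega i) r.

Definition mean (omega : T -> T -> R) (r : R) (v : T -> R) : R :=
  mass omega r v / mass omega r (fun _ => 1).

Definition in_unit_interval (u : T -> R) : Prop := forall i, 0 <= u i <= 1.

Definition in_B (u beta : T -> R) : Prop :=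
  in_unit_interval u /\
  forall i, [/\ u i = 0 -> 0 <= beta i,
               0 < u i < 1 -> beta i = 0
             & u i = 1 -> beta i <= 0].

End GraphDefs.

(* Write -tau Delta = G - alpha I, where G is entrywise nonnegative with all
   row sums equal to alpha.  The power series of e^{-tau Delta} u is then the
   Cauchy product of the series of G^j u / j!, whose entries lie in
   [0, alpha^j / j!] when u takes values in [0, 1], with the series of
   e^{-alpha}; its limit lies in [0, e^alpha e^{-alpha}] = [0, 1].
   Hence w := e^{-tau Delta} u_n takes values in [0, 1], and the scheme together
   with beta in B(u_{n+1}) gives 0 <= beta <= ubar + betabar where u_{n+1} = 0,
   ubar - 1 + betabar <= beta <= 0 where u_{n+1} = 1, and beta = 0 elsewhere.
   Comparing beta with the linear interpolations (ubar + betabar)(1 - u_{n+1})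
   and (ubar - 1 + betabar) u_{n+1} and averaging against d^r forces
   -ubar <= betabar <= 1 - ubar, from which both bounds follow on each of the
   three sets. *)

From HB Require Import structures.
From mathcomp Require Import all_boot all_order all_algebra.
From mathcomp Require Import all_classical all_reals all_analysis.
From mathcomp Require Import ring lra.
Import Order.TTheory GRing.Theory Num.Theory.
Import numFieldNormedType.Exports.
Set Implicit Arguments. Unset Strict Implicit. Unset Printing Implicit Defensive.
Local Open Scope classical_set_scope.
Local Open Scope ring_scope.

Lemma binomial_div_fact (R : numFieldType) k j : (j <= k)%N ->
  'C(k, j)%:R / k`!%:R = (j`!%:R * (k - j)`!%:R)^-1 :> R.
Proof.
move=> jk; rewrite -(bin_fact jk) !natrM invfM mulrA mulfV ?mul1r //.
by rewrite pnatr_eq0 -lt0n bin_gt0.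
Qed.

Section CauchyProduct.
Variable R : realType.
Implicit Types (x y a b : R ^nat) (s : R).

Definition cauchy_product x y : R ^nat := fun k => \sum_(j < k.+1) x j * y (k - j)%N.

Lemma series_cauchy_product x y N :
  series (cauchy_product x y) N =
  \sum_(0 <= j < N) \sum_(0 <= m < N | (j + m < N)%N) x j * y m.
Proof.
rewrite /series /= /cauchy_product.
under eq_big_nat => k /andP[_ kN].
  rewrite -(big_mkord xpredT (fun j => x j * y (k - j)%N)) (big_nat_widen _ _ _ _ _ kN).
  over.
rewrite (exchange_big_dep_nat xpredT) //=; apply: eq_big_nat => j /andP[_ jN].
rewrite [LHS](_ : _ = \sum_(j <= k < N) x j * y (k - j)%N); last first.
  by rewrite (big_nat_widenl _ _ _ _ _ (leq0n j)).
rewrite -{1}(add0n j) big_addn (big_nat_widen _ _ _ _ _ (leq_subr j N)).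
by apply: eq_big => [m|m _]; rewrite ?addnK // ltn_subRL addnC.
Qed.

Lemma series_mul_sub_cauchy_product x y N :
  series x N * series y N - series (cauchy_product x y) N =
  \sum_(0 <= j < N) \sum_(0 <= m < N | (N <= j + m)%N) x j * y m.
Proof.
rewrite series_cauchy_product /series /= big_distrlr -sumrB.
apply: eq_bigr => j _; rewrite (bigID (fun m => (j + m < N)%N)) /= addrC addKr.
by apply: eq_bigl => m; rewrite -leqNgt.
Qed.

(* A Mertens-type theorem in which absolute convergence is replaced by a
   dominating pair whose Cauchy product is known to converge (for exponential
   series, by expRD). *)
Lemma cvg_series_cauchy_product_dominated x y a b (X Y A B : R) :
  (forall n, `|x n| <= a n) -> (forall n, `|y n| <= b n) ->
  series x @ \oo --> X -> series y @ \oo --> Y ->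
  series a @ \oo --> A -> series b @ \oo --> B ->
  series (cauchy_product a b) @ \oo --> A * B ->
  series (cauchy_product x y) @ \oo --> X * Y.
Proof.
move=> xa yb xX yY aA bB abAB.
pose gap u v N := series u N * series v N - series (cauchy_product u v) N.
have gap_ab0 : gap a b @ \oo --> 0.
  by rewrite -(subrr (A * B)); apply: cvgB => //; apply: cvgM.
have gap_le N : `|gap x y N| <= gap a b N.
  rewrite /gap !series_mul_sub_cauchy_product.
  apply: le_trans (ler_norm_sum _ _ _) _; apply: ler_sum => j _.
  apply: le_trans (ler_norm_sum _ _ _) _; apply: ler_sum => m _.
  by rewrite normrM ler_pM.
have gap_xy0 : gap x y @ \oo --> 0.
  apply: (@squeeze_cvgr _ _ _ _ (fun N => - gap a b N) (gap a b)) => //.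
  - by near=> N; rewrite -ler_norml.
  - by rewrite -oppr0; apply: cvgN.
have -> : series (cauchy_product x y) = fun N => series x N * series y N - gap x y N.
  by apply/funext => N; rewrite subKr.
by rewrite -[X * Y]subr0; apply: cvgB => //; apply: cvgM.
Unshelve. all: by end_near.
Qed.

Lemma cauchy_product_exp_coeff s t :
  cauchy_product (exp_coeff s) (exp_coeff t) = exp_coeff (s + t).
Proof.
apply/funext => k; rewrite /cauchy_product /exp_coeff /= addrC exprDn mulr_suml.
apply: eq_bigr => j _; have jk : (j <= k)%N by rewrite -ltnS.
by rewrite -[_ *+ 'C(k, j)]mulr_natr -[RHS]mulrA binomial_div_fact // invfM; ring.
Qed.

Lemma cauchy_product_expN_bounds s x : 0 <= s ->
  (forall n, 0 <= x n <= exp_coeff s n) ->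
  exists2 l, series (cauchy_product x (exp_coeff (- s))) @ \oo --> l & 0 <= l <= 1.
Proof.
move=> s_ge0 x_bounds.
have x_ge0 n : 0 <= x n by case/andP: (x_bounds n).
have x_le n : x n <= exp_coeff s n by case/andP: (x_bounds n).
have x_cvg : cvgn (series x).
  exact: series_le_cvg x_ge0 (fun n => exp_coeff_ge0 n s_ge0) x_le (is_cvg_series_exp_coeff s).
exists (limn (series x) * expR (- s)).
  apply: (@cvg_series_cauchy_product_dominated _ _ (exp_coeff s) (exp_coeff s)).
  - by move=> n; rewrite ger0_norm.
  - by move=> n; rewrite /exp_coeff /= normrM normrX normrN !ger0_norm.
  - exact: x_cvg.
  - exact: is_cvg_series_exp_coeff.
  - exact: is_cvg_series_exp_coeff.
  - exact: is_cvg_series_exp_coeff.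
  - rewrite cauchy_product_exp_coeff -expRD; exact: is_cvg_series_exp_coeff.
have X_ge0 : 0 <= limn (series x).
  by apply: limr_ge => //; near=> N; apply: sumr_ge0.
have X_le : limn (series x) <= expR s.
  exact: lim_series_le x_cvg (is_cvg_series_exp_coeff s) x_le.
by rewrite mulr_ge0 ?expR_ge0 //= expRN ler_pdivrMr ?expR_gt0 // mul1r.
Unshelve. all: by end_near.
Qed.
End CauchyProduct.

Lemma scalemxXn (R : comPzRingType) n (c : R) (A : 'M[R]_n) k :
  (c *: A) ^+ k = c ^+ k *: A ^+ k.
Proof.
elim: k => [|k IH]; first by rewrite !expr0 scale1r.
by rewrite !exprS IH -mulmxE -scalemxAl -scalemxAr scalerA.
Qed.

Lemma exprD_scalar_mx_div_fact (R : realType) n (M : 'M[R]_n) (s : R) k :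
  (k`!%:R)^-1 *: (M + s%:M) ^+ k =
  \sum_(j < k.+1) (exp_coeff s (k - j)%N / j`!%:R) *: M ^+ j.
Proof.
rewrite addrC exprDn_comm; last exact/esym/scalar_mxC.
rewrite scaler_sumr; apply: eq_bigr => j _; have jk : (j <= k)%N by rewrite -ltnS.
rewrite -rmorphXn /= -mulmxE mul_scalar_mx scalerMnl scalerA; congr (_ *: _).
rewrite /exp_coeff /= -[_ *+ 'C(k, j)]mulr_natr mulrC -[LHS]mulrA binomial_div_fact // invfM.
ring.
Qed.

Lemma mx_pow_mul_col_bounds (R : realFieldType) n (A : 'M[R]_n) (s : R) (v : 'cV[R]_n) :
  (forall a b, 0 <= A a b) -> (forall a, \sum_b A a b = s) ->
  (forall a, 0 <= v a 0 <= 1) ->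
  forall j a, 0 <= (A ^+ j *m v) a 0 <= s ^+ j.
Proof.
move=> A_ge0 A_rows v01; elim=> [|j IH] a; first by rewrite mul1mx.
rewrite exprS -[A * _]/(A *m _) -mulmxA mxE; apply/andP; split.
  by apply: sumr_ge0 => b _; case/andP: (IH b) => *; rewrite mulr_ge0.
rewrite exprS -[s in s * _](A_rows a) mulr_suml; apply: ler_sum => b _.
by case/andP: (IH b) => _; apply: ler_wpM2l.
Qed.

Section LaplacianMatrix.
Variables (R : realType) (T : finType) (omega : T -> T -> R) (r : R).

Definition col_fun (v : T -> R) : 'cV[R]_#|T| := \col_a v (enum_val a).

Definition laplacian_mx : 'M[R]_#|T| :=
  \matrix_(a, b) ((powR (degree omega (enum_val a)) r)^-1 *
    ((enum_val a == enum_val b)%:R * degree omega (enum_val a) - omega (enum_val a) (enum_val b))).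

Lemma col_fun_laplacian v :
  col_fun (graph_laplacian omega r v) = laplacian_mx *m col_fun v.
Proof.
apply/matrixP => a k; rewrite !mxE (reindex enum_rank) /=; last exact/onW_bij/enum_rank_bij.
set i := enum_val a; rewrite /graph_laplacian.
under [RHS]eq_bigr do rewrite !mxE enum_rankK -mulrA.
rewrite -mulr_sumr; congr (_ * _).
under eq_bigr do rewrite mulrBr.
under [RHS]eq_bigr do rewrite mulrBl.
rewrite !sumrB -/i; congr (_ - _).
rewrite -mulr_suml [RHS](bigD1 i) //= eqxx mul1r [X in _ + X]big1 ?addr0 // => j ji.
by rewrite eq_sym (negPf ji) !mul0r.
Qed.

Lemma col_fun_iter_laplacian k v :
  col_fun (iter k (graph_laplacian omega r) v) = laplacian_mx ^+ k *m col_fun v.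
Proof.
elim: k => [|k IH] /=; first by rewrite mul1mx.
by rewrite col_fun_laplacian IH exprS mulmxA.
Qed.

Lemma laplacian_mx_row_sum a : \sum_b laplacian_mx a b = 0.
Proof.
have := congr1 (fun M : 'cV_#|T| => M a 0) (col_fun_laplacian (fun=> 1)).
rewrite !mxE /graph_laplacian big1 ?mulr0 => [E|j _]; last by rewrite subrr mulr0.
by rewrite [RHS]E; apply: eq_bigr => b _; rewrite [col_fun _ _ _]mxE mulr1.
Qed.

End LaplacianMatrix.

Section HeatSemigroup.
Variables (R : realType) (T : finType) (omega : T -> T -> R) (r tau : R).
Hypotheses (omega_ge0 : forall i j, 0 <= omega i j) (tau_ge0 : 0 <= tau).

(* Any upper bound of the diagonal entries tau d_i^{-r} d_i of tau Delta would
   do: it makes heat_generator_mx entrywise nonnegative. *)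
Definition laplacian_shift : R :=
  tau * \sum_i (powR (degree omega i) r)^-1 * degree omega i.

Definition heat_generator_mx : 'M[R]_#|T| :=
  laplacian_shift%:M - tau *: laplacian_mx omega r.

Lemma laplacian_shift_ge0 : 0 <= laplacian_shift.
Proof.
by rewrite mulr_ge0 // sumr_ge0 // => i _; rewrite mulr_ge0 ?invr_ge0 ?powR_ge0 ?sumr_ge0.
Qed.

Lemma heat_generator_mx_ge0 a b : 0 <= heat_generator_mx a b.
Proof.
have c_ge0 i : 0 <= (powR (degree omega i) r)^-1 by rewrite invr_ge0 powR_ge0.
rewrite !mxE (inj_eq enum_val_inj); have [<-|_] := eqVneq a b; last first.
  by rewrite mulr0n add0r mul0r sub0r !mulrN opprK !mulr_ge0.
rewrite mulr1n mul1r -mulrBr mulr_ge0 // subr_ge0; set i := enum_val a.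
apply: (@le_trans _ _ ((powR (degree omega i) r)^-1 * degree omega i)).
  by rewrite ler_wpM2l // lerBlDr lerDl.
rewrite (bigD1 i) //= lerDl; apply: sumr_ge0 => k _.
by rewrite mulr_ge0 ?sumr_ge0.
Qed.

Lemma heat_generator_mx_row_sum a : \sum_b heat_generator_mx a b = laplacian_shift.
Proof.
move: (laplacian_mx_row_sum omega r a); under eq_bigr do rewrite mxE; move=> row0.
under eq_bigr do rewrite !mxE.
rewrite sumrB -mulr_sumr row0 mulr0 subr0.
by rewrite (bigD1 a) //= eqxx big1 ?addr0 // => b /negPf; rewrite eq_sym => ->.
Qed.

Lemma heat_partial_sum_cauchy_product u i N :
  \sum_(k < N) ((- tau) ^+ k / k`!%:R) * iter k (graph_laplacian omega r) u i =
  series (cauchy_product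
    (fun j => (heat_generator_mx ^+ j *m col_fun u) (enum_rank i) 0 / j`!%:R)
    (exp_coeff (- laplacian_shift))) N.
Proof.
rewrite /series /= big_mkord; apply: eq_bigr => k _.
have shift : - tau *: laplacian_mx omega r = heat_generator_mx + (- laplacian_shift)%:M.
  by rewrite raddfN addrAC subrr add0r scaleNr.
transitivity (((k`!%:R)^-1 *: (- tau *: laplacian_mx omega r) ^+ k *m col_fun u) (enum_rank i) 0).
  by rewrite scalemxXn scalerA -scalemxAl mxE -col_fun_iter_laplacian mxE enum_rankK (mulrC _^-1).
rewrite shift exprD_scalar_mx_div_fact mulmx_suml summxE; apply: eq_bigr => j _.
by rewrite -scalemxAl mxE; ring.
Qed.

Theorem heat_semigroup_unit_interval u : in_unit_interval u ->
  forall i, 0 <= heat_semigroup omega r tau u i <= 1.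
Proof.
move=> u01 i.
pose x j := (heat_generator_mx ^+ j *m col_fun u) (enum_rank i) 0 / j`!%:R.
have x_bounds j : 0 <= x j <= exp_coeff laplacian_shift j.
  have col01 a : 0 <= col_fun u a 0 <= 1 by rewrite mxE; exact: u01.
  have /andP[pow_ge0 pow_le] := mx_pow_mul_col_bounds heat_generator_mx_ge0
    heat_generator_mx_row_sum col01 j (enum_rank i).
  by rewrite divr_ge0 //= ler_wpM2r.
have [l l_lim l01] := cauchy_product_expN_bounds laplacian_shift_ge0 x_bounds.
rewrite /heat_semigroup.
under eq_fun do rewrite heat_partial_sum_cauchy_product.
by rewrite (cvg_lim _ l_lim).
Qed.

End HeatSemigroup.

Lemma unit_interval_cases (R : realDomainType) (x : R) :
  0 <= x <= 1 -> [\/ x = 0, x = 1 | 0 < x < 1].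
Proof.
move=> /andP[x_ge0 x_le1].
have [->|x_ne0] := eqVneq x 0; first by constructor 1.
have [->|x_ne1] := eqVneq x 1; first by constructor 2.
by constructor 3; rewrite !lt_def x_ne0 x_ge0 eq_sym x_ne1 x_le1.
Qed.

Lemma scheme_multiplier_bounds (R : realFieldType) (lam w x beta ub c : R) :
  0 < lam -> 0 <= w <= 1 ->
  x - w - lam * x + lam * ub = lam * beta - lam * c ->
  (x = 0 -> beta <= ub + c) /\ (x = 1 -> ub - 1 + c <= beta).
Proof.
move=> lam_gt0 /andP[w_ge0 w_le1] scheme.
by split=> x_val; move: scheme; rewrite x_val; nra.
Qed.

Section MultiplierMean.
Variables (R : realType) (T : finType) (m u beta : T -> R) (ub c : R).
Hypotheses (m_ge0 : forall i, 0 <= m i) (mass_gt0 : 0 < \sum_i m i) (ub01 : 0 < ub < 1).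
Hypotheses (mass_u : \sum_i u i * m i = ub * \sum_i m i)
  (mass_beta : \sum_i beta i * m i = c * \sum_i m i).
Hypotheses (beta_B : in_B u beta)
  (beta_le_at0 : forall i, u i = 0 -> beta i <= ub + c)
  (beta_ge_at1 : forall i, u i = 1 -> ub - 1 + c <= beta i).

Lemma multiplier_cases i :
  [\/ u i = 0 /\ 0 <= beta i <= ub + c, u i = 1 /\ ub - 1 + c <= beta i <= 0
    | 0 < u i < 1 /\ beta i = 0].
Proof.
have [u01 /(_ i)[sign0 inside sign1]] := beta_B.
case: (unit_interval_cases (u01 i)) => u_val.
- by constructor 1; rewrite sign0 ?beta_le_at0.
- by constructor 2; rewrite sign1 ?beta_ge_at1 ?andbT.
- by constructor 3; rewrite inside.
Qed.

Lemma mean_multiplier_le : c <= 1 - ub.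
Proof.
rewrite leNgt; apply/negP => c_gt.
have beta_le i : beta i <= (ub + c) * (1 - u i).
  case: (multiplier_cases i) => -[u_val b_val].
  - by rewrite u_val subr0 mulr1; case/andP: b_val.
  - by rewrite u_val subrr mulr0; case/andP: b_val.
  - by rewrite b_val; case/andP: u_val => _ ?; apply: mulr_ge0; lra.
have : c * \sum_i m i <= (ub + c) * (1 - ub) * \sum_i m i.
  rewrite -mass_beta -mulrA mulrBl mul1r -mass_u -sumrB mulr_sumr.
  apply: ler_sum => i _.
  by rewrite -{2}[m i]mul1r -mulrBl mulrA ler_wpM2r.
rewrite ler_pM2r //; move: ub01 => /andP[? ?]; nra.
Qed.

Lemma mean_multiplier_ge : - ub <= c.
Proof.
rewrite leNgt; apply/negP => c_lt.
have beta_ge i : (ub - 1 + c) * u i <= beta i.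
  case: (multiplier_cases i) => -[u_val b_val].
  - by rewrite u_val mulr0; case/andP: b_val.
  - by rewrite u_val mulr1; case/andP: b_val.
  - by rewrite b_val; case/andP: u_val => ? _; nra.
have : (ub - 1 + c) * ub * \sum_i m i <= c * \sum_i m i.
  rewrite -mass_beta -mulrA -mass_u mulr_sumr.
  by apply: ler_sum => i _; rewrite mulrA ler_wpM2r.
rewrite ler_pM2r //; move: ub01 => /andP[? ?]; nra.
Qed.

Lemma multiplier_bounds i : ub - 1 <= beta i - c <= ub /\ -1 <= beta i <= 1.
Proof.
have := mean_multiplier_le; have := mean_multiplier_ge.
case: (multiplier_cases i) => -[_ b_val] c_ge c_le.
- by case/andP: b_val => *; lra.
- by case/andP: b_val => *; lra.
- by rewrite b_val; lra.
Qed.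

End MultiplierMean.

Theorem lemma38 (R : realType) (T : finType) (omega : T -> T -> R) (r : R)
  (eps tau : R) (un un1 beta : T -> R) :
  weighted_graph omega ->
  0 <= r <= 1 ->
  0 < eps -> 0 < tau -> tau <= eps ->
  in_unit_interval un ->
  in_B un1 beta ->
  (forall i,
     un1 i - heat_semigroup omega r tau un i - (tau / eps) * un1 i
       + (tau / eps) * mean omega r un1
     = (tau / eps) * beta i - (tau / eps) * mean omega r beta) ->
  mean omega r un = mean omega r un1 ->
  0 < mean omega r un1 < 1 ->
  forall i,
    mean omega r un1 - 1 <= beta i - mean omega r beta <= mean omega r un1 /\
    -1 <= beta i <= 1.
Proof.
move=> [_ omega_ge0 _ _] _ eps_gt0 tau_gt0 _ un01 beta_B scheme _ ub01.
pose m i := powR (degree omega i) r.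
have m_ge0 i : 0 <= m i by exact: powR_ge0.
have mass1E : mass omega r (fun=> 1) = \sum_i m i by apply: eq_bigr => i _; rewrite mul1r.
have mass_gt0 : 0 < \sum_i m i.
  rewrite lt_def sumr_ge0 // andbT; apply: contraTneq ub01 => mass0.
  by rewrite /mean mass1E mass0 invr0 mulr0 ltxx.
have massE v : \sum_i v i * m i = mean omega r v * \sum_i m i.
  by rewrite /mean mass1E divfK ?gt_eqF.
have heat01 := heat_semigroup_unit_interval r omega_ge0 (ltW tau_gt0) un01.
have step i := scheme_multiplier_bounds (divr_gt0 tau_gt0 eps_gt0) (heat01 i) (scheme i).
exact: (multiplier_bounds m_ge0 mass_gt0 ub01 (massE _) (massE _) beta_B
  (fun i => (step i).1) (fun i => (step i).2)).
Qed.
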